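(* Let $\sigma\subseteq N_\mathbb{Q}$ be a strongly convex rational polyhedral cone, $\tau$ a $k$-dimensional regular face with primitive ray generators $p_1,\ldots,p_k$, $\{e_1^{(r)},e_2^{(r)}\}_{r=1}^k$ a set of Demazure roots of $\sigma$ compatible with $\tau$, and $\gamma$ a face of $\sigma$. Suppose that for each $r$ with $p_r\notin\gamma$ at least one of $e_1^{(r)},e_2^{(r)}$ lies in $\gamma^\perp$. Then for every $r$ with $p_r\notin\gamma$ there exists $u\in\gamma^\perp\cap\sigma^\vee$ such that $\langle p_r,u\rangle=1$ and $\langle p_j,u\rangle=0$ for all $j\ne r$, $1\le j\le k$.
   Context: $N$ lattice, $M$ dual, $\langle\cdot,\cdot\rangle$ pairing, $\sigma^\vee$ the dual cone. Regular face: primitive ray generators extend to a basis of $N$. Demazure root for a ray generator $p_i$ of $\sigma$: $e\in M$ with $\langle p_i,e\rangle=-1$ and $\langle p_j,e\rangle\ge0$ for all other ray generators of $\sigma$. Compatibility with $\tau$: $\langle p_s,e_1^{(r)}\rangle=\langle p_s,e_2^{(r)}\rangle=-\delta_{rs}$ for $r,s=1,\ldots,k$. *)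

(* N = Z^n (row vectors 'rV[int]_n), M = Z^n (dual, same
   representation), N_Q = M_Q = 'rV[rat]_n, pairing = standard dot product. *)
From HB Require Import structures.
From mathcomp Require Import all_boot all_order all_algebra.
Set Implicit Arguments. Unset Strict Implicit. Unset Printing Implicit Defensive.
Import Order.TTheory GRing.Theory Num.Theory.
Local Open Scope ring_scope.

Section Toric.
Variable n : nat.

Definition pairQ (x m : 'rV[rat]_n) : rat := \sum_(i < n) x 0 i * m 0 i.
Definition pairZ (v e : 'rV[int]_n) : int := \sum_(i < n) v 0 i * e 0 i.
Definition toQ (v : 'rV[int]_n) : 'rV[rat]_n := map_mx (fun z : int => z%:~R) v.

Definition in_cone (S : seq 'rV[int]_n) (x : 'rV[rat]_n) : Prop :=
  exists lam : 'I_(size S) -> rat,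
    (forall i, 0 <= lam i) /\ x = \sum_(i < size S) lam i *: toQ (nth 0 S i).

Definition strongly_convex (S : seq 'rV[int]_n) : Prop :=
  forall x, in_cone S x -> in_cone S (- x) -> x = 0.

Definition is_face_of (C F : 'rV[rat]_n -> Prop) : Prop :=
  exists m : 'rV[rat]_n,
    (forall x, C x -> 0 <= pairQ x m) /\
    (forall x, F x <-> (C x /\ pairQ x m = 0)).

Definition primitive (v : 'rV[int]_n) : Prop :=
  v != 0 /\ forall (d : int) (w : 'rV[int]_n), v = d *: w -> `|d| = 1.

Definition ray (p : 'rV[int]_n) (x : 'rV[rat]_n) : Prop :=
  exists t : rat, 0 <= t /\ x = t *: toQ p.

Definition ray_gen (C : 'rV[rat]_n -> Prop) (p : 'rV[int]_n) : Prop :=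
  primitive p /\ is_face_of C (ray p).

Definition demazure_root (S : seq 'rV[int]_n) (p e : 'rV[int]_n) : Prop :=
  ray_gen (in_cone S) p /\ pairZ p e = -1 /\
  (forall q, ray_gen (in_cone S) q -> q <> p -> 0 <= pairZ q e).

Definition extends_to_basis (k : nat) (p : 'I_k -> 'rV[int]_n) : Prop :=
  exists B : 'M[int]_n, B \in unitmx /\
    exists f : 'I_k -> 'I_n, injective f /\ forall i, row (f i) B = p i.

Definition in_perp (g : 'rV[rat]_n -> Prop) (m : 'rV[int]_n) : Prop :=
  forall x, g x -> pairQ x (toQ m) = 0.

Definition in_dual (S : seq 'rV[int]_n) (m : 'rV[int]_n) : Prop :=
  forall x, in_cone S x -> 0 <= pairQ x (toQ m).

End Toric.

(* A pointed rational cone is generated by its primitive ray generators, and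
   each of them spans an exposed ray: after discarding redundant generators,
   the ray of a remaining generator is exposed by Gordan's alternative (proved
   by Fourier-Motzkin elimination), because a nonnegative relation among the
   other generators, projected along it, would contradict irredundancy or
   pointedness.  Hence a linear form is nonnegative on sigma as soon as it is
   nonnegative on every primitive ray generator.

   Scale a vector exposing gamma to a lattice vector M of gamma^perp lying in
   sigma^dual; it is positive on the p_j outside gamma and zero on the others.
   For each p_j outside gamma let E_j be a root among e_1^(j), e_2^(j) lying in
   gamma^perp, and put u = M + sum_j a_j E_j with a_j = <p_j, M> - delta_jr >= 0.
   Compatibility gives <p_j, u> = delta_jr, a_j = 0 whenever p_j lies in gamma
   so u stays in gamma^perp, and on every other ray generator each E_j is
   nonnegative by the Demazure root condition, so u lies in sigma^dual. *)

From HB Require Import structures.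
From mathcomp Require Import all_boot all_order all_algebra.
From mathcomp Require Import ring lra zify.
From Stdlib Require Import Classical.
Set Implicit Arguments. Unset Strict Implicit. Unset Printing Implicit Defensive.
Import Order.TTheory GRing.Theory Num.Theory.
Local Open Scope ring_scope.

Section Pairings.
Variable n : nat.
Implicit Types (x y : 'rV[rat]_n) (v w : 'rV[int]_n).

Lemma pairQ_is_bilinear : bilinear_for
  (GRing.Scale.Law.clone _ _ *%R _) (GRing.Scale.Law.clone _ _ *%R _) (@pairQ n).
Proof.
by split=> [m|x] a y z /=; rewrite /pairQ mulr_sumr -big_split;
  apply: eq_bigr => i _; rewrite !mxE /=; ring.
Qed.

HB.instance Definition _ := bilinear_isBilinear.Build rat 'rV[rat]_n 'rV[rat]_n rat
  _ _ (@pairQ n) pairQ_is_bilinear.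

Lemma pairZ_is_bilinear : bilinear_for
  (GRing.Scale.Law.clone _ _ *%R _) (GRing.Scale.Law.clone _ _ *%R _) (@pairZ n).
Proof.
by split=> [m|x] a y z /=; rewrite /pairZ mulr_sumr -big_split;
  apply: eq_bigr => i _; rewrite !mxE /=; ring.
Qed.

HB.instance Definition _ := bilinear_isBilinear.Build int 'rV[int]_n 'rV[int]_n int
  _ _ (@pairZ n) pairZ_is_bilinear.

Lemma pairQ_delta x j : pairQ x (delta_mx 0 j) = x 0 j.
Proof.
rewrite /pairQ (bigD1 j) //= big1 => [|i /negbTE ij]; rewrite mxE ?ij.
  by rewrite !eqxx mulr1 addr0.
by rewrite andbF mulr0.
Qed.

Lemma toQZ c v : toQ (c *: v) = c%:~R *: toQ v.
Proof. exact: map_mxZ. Qed.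

Lemma toQ_eq0 v : (toQ v == 0) = (v == 0).
Proof.
apply/eqP/eqP => [/rowP v0|->]; last by apply/rowP => j; rewrite !mxE.
by apply/rowP => j; have /eqP := v0 j; rewrite !mxE intr_eq0 => /eqP.
Qed.

Lemma pairQ_toQ v w : pairQ (toQ v) (toQ w) = (pairZ v w)%:~R.
Proof. by rewrite /pairQ rmorph_sum; apply: eq_bigr => i _; rewrite !mxE /= intrM. Qed.

Lemma primitive_decomposition v : v != 0 ->
  exists2 c : int, 0 < c & exists2 q, primitive q & v = c *: q.
Proof.
move=> v_neq0; pose c := \big[gcdn/0%N]_j `|v 0%R j|%N.
have c_dvd j : (c %| `|v 0%R j|)%N by apply: biggcdn_inf.
have c_gt0 : (0 < c)%N.
  rewrite lt0n; apply: contra v_neq0 => /eqP c0; apply/eqP/rowP => j.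
  by have := c_dvd j; rewrite c0 dvd0n absz_eq0 mxE => /eqP.
pose q := \row_j divz (v 0 j) c%:Z.
have v_cq : v = c%:Z *: q by apply/rowP => j; rewrite !mxE mulrC divzK //; exact: c_dvd.
exists c%:Z; first by rewrite ltz_nat.
exists q => //; split.
  by apply: contra v_neq0 => /eqP q0; rewrite v_cq q0 scaler0.
move=> d w q_dw; have : (c * `|d| %| c * 1)%N.
  rewrite muln1 {2}/c; apply/dvdn_biggcdP => j _.
  by rewrite v_cq q_dw !mxE !abszM mulnA dvdn_mulr.
by rewrite dvdn_pmul2l // dvdn1 => /eqP d1; rewrite -abszE d1.
Qed.

Lemma scale_to_lattice x : exists2 D : int, 0 < D & exists M, toQ M = D%:~R *: x.
Proof.
exists (\prod_(i < n) denq (x 0 i)); first by apply: prodr_gt0 => i _; exact: denq_gt0.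
exists (\row_i (numq (x 0 i) * \prod_(j < n | j != i) denq (x 0 j))).
apply/rowP => i; rewrite !mxE [in RHS](bigD1 i) //= !intrM.
have x_frac : x 0 i = (numq (x 0 i))%:~R / (denq (x 0 i))%:~R by rewrite divq_num_den.
have : (denq (x 0 i))%:~R != 0 :> rat by rewrite intr_eq0 denq_neq0.
by rewrite [X in _ = _ * X]x_frac => den_neq0; field.
Qed.

End Pairings.

Lemma exists_between (I : finType) (P Q : pred I) (L U : I -> rat) :
  (forall i j, P i -> Q j -> L i < U j) ->
  exists t, (forall i, P i -> L i < t) /\ (forall j, Q j -> t < U j).
Proof.
move=> LU; case: (pickP P) => [i0 Pi0|noP]; case: (pickP Q) => [j0 Qj0|noQ].
- case: (arg_maxP L Pi0) => i Pi maxi; case: (arg_minP U Qj0) => j Qj minj.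
  exists ((L i + U j) / 2); have := LU i j Pi Qj.
  by move=> ?; split=> [i' /maxi /= ?|j' /minj /= ?]; lra.
- case: (arg_maxP L Pi0) => i Pi maxi.
  by exists (L i + 1); split=> [i' /maxi /= ?|j']; [lra | rewrite noQ].
- case: (arg_minP U Qj0) => j Qj minj.
  by exists (U j - 1); split=> [i'|j' /minj /= ?]; [rewrite noP | lra].
- by exists 0; split=> k; rewrite (noP, noQ).
Qed.

Section Gordan.
Variable n : nat.

Definition has_positive_dual (I : finType) (B : {set I}) (a : I -> 'rV[rat]_n) :=
  exists y, forall i, i \in B -> 0 < pairQ (a i) y.

Definition has_nonneg_relation (I : finType) (B : {set I}) (a : I -> 'rV[rat]_n) :=
  exists lam : I -> rat, [/\ forall i, 0 <= lam i, forall i, i \notin B -> lam i = 0,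
    exists i, 0 < lam i & \sum_i lam i *: a i = 0].

Lemma nonneg_relation_comb (I J : finType) (A : {set I}) (B : {set J})
    (a : I -> 'rV[rat]_n) (w : J -> I -> rat) :
  (forall x i, x \in B -> 0 <= w x i) ->
  (forall x i, x \in B -> i \notin A -> w x i = 0) ->
  (forall x, x \in B -> exists i, 0 < w x i) ->
  has_nonneg_relation B (fun x => \sum_i w x i *: a i) -> has_nonneg_relation A a.
Proof.
move=> w_ge0 w_supp w_pos [lam [lam_ge0 lam_supp [x0 lam_x0] lam_rel]].
have term_ge0 x i : 0 <= lam x * w x i.
  by case: (boolP (x \in B)) => [xB|/lam_supp->]; rewrite ?mul0r ?mulr_ge0 ?w_ge0.
exists (fun i => \sum_x lam x * w x i); split.
- by move=> i; apply: sumr_ge0 => x _.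
- move=> i iA; apply: big1 => x _.
  by case: (boolP (x \in B)) => [/w_supp->|/lam_supp->]; rewrite ?mulr0 ?mul0r.
- have x0B : x0 \in B by apply: contraLR lam_x0 => /lam_supp->; rewrite ltxx.
  have [i0 w_i0] := w_pos x0 x0B; exists i0.
  rewrite (bigD1 x0) //= ltr_wpDr ?mulr_gt0 //.
  by apply: sumr_ge0 => x _.
- rewrite -[RHS]lam_rel; under eq_bigr do rewrite scaler_suml.
  rewrite exchange_big; apply: eq_bigr => x _.
  by rewrite scaler_sumr; apply: eq_bigr => i _; rewrite scalerA.
Qed.

Section FourierMotzkin.
Variables (I : finType) (B : {set I}) (a : I -> 'rV[rat]_n) (j0 : 'I_n).

Let al i := a i 0 j0.

(* Fourier-Motzkin elimination of the coordinate [j0]: keep the [a i] whose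
   [j0]-coordinate vanishes ([inl i]) and, for every [i] and [j] where it is
   positive and negative, the positive combination of [a i] and [a j] in which
   it cancels ([inr (i, j)]). *)
Definition fm_set : {set I + I * I} := [set x | match x with
  | inl i => (i \in B) && (al i == 0)
  | inr (i, j) => [&& i \in B, j \in B, 0 < al i & al j < 0] end].

Definition fm_weight (x : I + I * I) (k : I) : rat := match x with
  | inl i => (k == i)%:R
  | inr (i, j) => (k == i)%:R * - al j + (k == j)%:R * al i end.

Definition fm_vec x := \sum_k fm_weight x k *: a k.

Lemma sum_fm_weight x (F : I -> rat) : \sum_k fm_weight x k * F k =
  match x with inl i => F i | inr (i, j) => - al j * F i + al i * F j end.
Proof.
have sum_delta i : \sum_k (k == i)%:R * F k = F i.
  by rewrite (bigD1 i) //= eqxx mul1r big1 ?addr0 // => k /negbTE->; rewrite mul0r.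
case: x => [i|[i j]] /=; first exact: sum_delta.
rewrite -(sum_delta i) -(sum_delta j) !mulr_sumr -big_split /=.
by apply: eq_bigr => k _; ring.
Qed.

Lemma pairQ_fm_vec x y :
  pairQ (fm_vec x) y = \sum_k fm_weight x k * pairQ (a k) y.
Proof. by rewrite linear_sumlz; apply: eq_bigr => k _; rewrite linearZl_LR. Qed.

Lemma fm_weight_ge0 x k : x \in fm_set -> 0 <= fm_weight x k.
Proof.
rewrite inE; case: x => [i|[i j] /and4P [_ _ al_i al_j]] /=; first by rewrite ler0n.
by apply: addr_ge0; apply: mulr_ge0; rewrite ?ler0n; lra.
Qed.

Lemma fm_weight_supp x k : x \in fm_set -> k \notin B -> fm_weight x k = 0.
Proof.
rewrite inE; case: x => [i /andP [iB _]|[i j] /and4P [iB jB _ _]] kB /=.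
  by case: eqP kB => [->|]; rewrite ?iB.
by case: eqP kB => [->|_]; rewrite ?iB // mul0r add0r;
  case: eqP => [->|]; rewrite ?jB ?mul0r.
Qed.

Lemma fm_weight_pos x : x \in fm_set -> exists k, 0 < fm_weight x k.
Proof.
rewrite inE; case: x => [i _|[i j] /and4P [_ _ al_i al_j]]; exists i => /=.
  by rewrite eqxx ltr01.
have -> : (i == j) = false by apply/eqP => ij; move: al_i al_j; rewrite ij; lra.
by rewrite eqxx mul1r mul0r addr0 oppr_gt0.
Qed.

Lemma fm_vec_j0 x : x \in fm_set -> fm_vec x 0 j0 = 0.
Proof.
rewrite /fm_vec summxE (eq_bigr (fun k => fm_weight x k * al k)) => [|k _]; last first.
  by rewrite mxE.
rewrite sum_fm_weight inE; case: x => [i /andP [_ /eqP //]|[i j] _]; ring.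
Qed.

Lemma fm_lift_positive_dual :
  has_positive_dual fm_set fm_vec -> has_positive_dual B a.
Proof.
move=> [y y_pos].
pose L i := - pairQ (a i) y / al i; pose U j := pairQ (a j) y / - al j.
have LU i j : (i \in B) && (0 < al i) -> (j \in B) && (al j < 0) -> L i < U j.
  move=> /andP [iB al_i] /andP [jB al_j].
  have := y_pos (inr (i, j)); rewrite inE iB jB al_i al_j /= => /(_ isT).
  rewrite pairQ_fm_vec sum_fm_weight /L /U ltr_pdivrMr // mulrAC ltr_pdivlMr ?oppr_gt0 //.
  nra.
have [t [Lt tU]] := exists_between LU.
exists (y + t *: delta_mx 0 j0) => i iB.
rewrite linearDr linearZr_LR /= pairQ_delta -/(al i).
case: (ltrgtP (al i) 0) => al_i.
- by have := tU i; rewrite iB al_i /U ltr_pdivlMr ?oppr_gt0 // => /(_ isT); nra.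
- by have := Lt i; rewrite iB al_i /L ltr_pdivrMr // => /(_ isT); nra.
- have := y_pos (inl i); rewrite inE iB al_i eqxx pairQ_fm_vec sum_fm_weight.
  by rewrite mulr0 addr0 => /(_ isT).
Qed.

End FourierMotzkin.

Lemma gordan_support (m : nat) (I : finType) (B : {set I}) (a : I -> 'rV[rat]_n) :
  (forall i (j : 'I_n), i \in B -> (m <= j)%N -> a i 0 j = 0) ->
  has_positive_dual B a \/ has_nonneg_relation B a.
Proof.
elim: m I B a => [|m IH] I B a a_supp.
  have [->|[i0 i0B]] := set_0Vmem B; first by left; exists 0 => i; rewrite inE.
  right; exists (fun i => (i == i0)%:R); split => [i|i|//|].
  - by rewrite ler0n.
  - by case: eqP => [->|]; rewrite ?i0B.
  - by exists i0; rewrite eqxx ltr01.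
  rewrite (bigD1 i0) //= big1 => [|i /negbTE->]; last by rewrite scale0r.
  suff -> : a i0 = 0 by rewrite scaler0 addr0.
  by apply/rowP => j; rewrite mxE a_supp.
have [n_le_m|m_lt_n] := leqP n m.
  by apply: IH => i j _ m_le_j; have := ltn_ord j; lia.
pose j0 := Ordinal m_lt_n.
have fm_supp x (j : 'I_n) : x \in fm_set B a j0 -> (m <= j)%N -> fm_vec a j0 x 0 j = 0.
  move=> xB; rewrite leq_eqVlt => /orP [/eqP mj|m_lt_j].
    have -> : j = j0 by apply: val_inj; rewrite /= mj.
    exact: (fm_vec_j0 xB).
  rewrite /fm_vec summxE big1 // => k _; rewrite mxE.
  case: (boolP (k \in B)) => [kB|/(fm_weight_supp xB)->]; last by rewrite mul0r.
  by rewrite a_supp ?mulr0.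
case: (IH _ _ _ fm_supp) => [/fm_lift_positive_dual|rel]; [by left | right].
apply: (nonneg_relation_comb (w := fm_weight a j0) _ _ _ rel) => [x k|x k|x].
- exact: fm_weight_ge0.
- exact: fm_weight_supp.
- exact: fm_weight_pos.
Qed.

Lemma gordan (I : finType) (B : {set I}) (a : I -> 'rV[rat]_n) :
  has_positive_dual B a \/ has_nonneg_relation B a.
Proof. by apply: (@gordan_support n) => i j _; rewrite leqNgt ltn_ord. Qed.
End Gordan.

Section ConeGenerators.
Variables (n : nat) (S : seq 'rV[int]_n).
Local Notation idx := 'I_(size S).
Implicit Types (A B : {set idx}) (x y : 'rV[rat]_n).

Definition gen (i : idx) : 'rV[rat]_n := toQ (nth 0 S i).

Definition cone_on (A : {set idx}) (x : 'rV[rat]_n) :=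
  exists2 lam : idx -> rat, forall i, 0 <= lam i & x = \sum_(i in A) lam i *: gen i.

Definition irredundant (A : {set idx}) :=
  forall i, i \in A -> ~ cone_on (A :\ i) (gen i).

Lemma in_cone_setT x : in_cone S x <-> cone_on setT x.
Proof.
split=> [[lam [lam_ge0 ->]]|[lam lam_ge0 ->]]; [exists lam | exists lam; split] => //.
  by apply: eq_bigl => i; rewrite inE.
by apply: eq_bigl => i; rewrite inE.
Qed.

Lemma cone_on_sum A (P : pred idx) (lam : idx -> rat) :
  (forall i, P i -> i \in A) -> (forall i, P i -> 0 <= lam i) ->
  cone_on A (\sum_(i | P i) lam i *: gen i).
Proof.
move=> PA lam_ge0; exists (fun i => if P i then lam i else 0) => [i|].
  by case: ifP => // /lam_ge0.
rewrite big_mkcond [RHS]big_mkcond; apply: eq_bigr => i _.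
by case: ifP => [/PA->|_] //; case: ifP; rewrite ?scale0r.
Qed.

Lemma cone_on_gen A i t : i \in A -> 0 <= t -> cone_on A (t *: gen i).
Proof.
move=> iA t_ge0; have := @cone_on_sum A (pred1 i) (fun=> t).
by rewrite big_pred1_eq; apply=> // j /eqP->.
Qed.

Lemma cone_onD A x y : cone_on A x -> cone_on A y -> cone_on A (x + y).
Proof.
move=> [lam lam_ge0 ->] [mu mu_ge0 ->]; exists (lam \+ mu) => [i|].
  exact: addr_ge0.
by rewrite -big_split; apply: eq_bigr => i _; rewrite scalerDl.
Qed.

Lemma cone_onS A B x : A \subset B -> cone_on A x -> cone_on B x.
Proof. by move=> /subsetP AB [lam lam_ge0 ->]; apply: cone_on_sum. Qed.

Lemma cone_on_setD1 A i x :
  i \in A -> cone_on (A :\ i) (gen i) -> cone_on A x -> cone_on (A :\ i) x.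
Proof.
move=> iA [mu mu_ge0 gen_i] [lam lam_ge0 ->].
rewrite (big_setD1 i iA) /= gen_i scaler_sumr -big_split /=.
exists (fun j => lam i * mu j + lam j) => [j|]; first by rewrite addr_ge0 ?mulr_ge0.
by apply: eq_bigr => j _; rewrite scalerDl scalerA.
Qed.

Lemma irredundant_gen_neq0 A i : irredundant A -> i \in A -> gen i != 0.
Proof.
move=> irrA iA; apply/eqP => gen0; apply: (irrA i iA); rewrite gen0.
by exists (fun=> 0) => //; rewrite big1 // => j _; rewrite scale0r.
Qed.

Lemma exists_irredundant :
  exists2 A, irredundant A & forall x, cone_on A x <-> in_cone S x.
Proof.
suff: forall A : {set idx}, (forall x, cone_on A x <-> in_cone S x) ->
    exists2 A, irredundant A & forall x, cone_on A x <-> in_cone S x.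
  by apply=> x; apply: iff_sym; exact: in_cone_setT.
move=> A; have [k] := ubnP #|A|; elim: k A => // k IH A; rewrite ltnS => cardA genA.
have [[i [iA red_i]]|irrA] := classic (exists i, i \in A /\ cone_on (A :\ i) (gen i)).
  apply: (IH (A :\ i)); first by rewrite (cardsD1 i A) iA in cardA.
  move=> x; rewrite -genA; split; first exact/cone_onS/subD1set.
  exact: cone_on_setD1.
by exists A => // i iA red_i; apply: irrA; exists i.
Qed.

End ConeGenerators.

Section ExtremeRays.
Variables (n : nat) (S : seq 'rV[int]_n) (A : {set 'I_(size S)}).
Hypothesis S_pointed : strongly_convex S.
Hypothesis A_irr : irredundant A.
Hypothesis A_gen : forall x, cone_on A x <-> in_cone S x.

Lemma irredundant_no_relation i j0 : i \in A -> gen i 0 j0 != 0 ->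
  ~ has_nonneg_relation (A :\ i)
      (fun j => gen j - (gen j 0 j0 / gen i 0 j0) *: gen i).
Proof.
move=> iA beta_neq0 [lam [lam_ge0 lam_supp [j1 lam_j1] rel]].
pose c := \sum_(j in A :\ i) lam j * (gen j 0 j0 / gen i 0 j0).
have comb : \sum_(j in A :\ i) lam j *: gen j = c *: gen i.
  apply/eqP; rewrite -subr_eq0 /c scaler_suml -sumrB; apply/eqP.
  rewrite -[RHS]rel big_mkcond /=; apply: eq_bigr => j _.
  case: ifP => [_|/negbT /lam_supp->].
    by rewrite scalerBr scalerA.
  by rewrite scale0r.
have j1_in : j1 \in A :\ i by apply: contraLR lam_j1 => /lam_supp->; rewrite ltxx.
have [c_gt0|c_le0] := ltrP 0 c.
  apply: (A_irr iA); exists (fun j => c^-1 * lam j) => [j|].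
    by apply: mulr_ge0 => //; rewrite invr_ge0 ltW.
  rewrite -[gen i]scale1r -(mulVf (lt0r_neq0 c_gt0)) -scalerA -comb scaler_sumr.
  by apply: eq_bigr => j _; rewrite scalerA.
pose x := lam j1 *: gen j1.
have x_cone : in_cone S x.
  by apply/A_gen/cone_on_gen; [case/setD1P: j1_in | exact: ltW].
have Nx_cone : in_cone S (- x).
  have -> : - x = (- c) *: gen i + \sum_(j in A :\ i | j != j1) lam j *: gen j.
    rewrite scaleNr; move: comb; rewrite (bigD1 j1 j1_in) /= -/x => <-.
    by rewrite opprD subrK.
  apply/A_gen/cone_onD; first by apply: cone_on_gen; rewrite ?oppr_ge0.
  by apply: cone_on_sum => [j /andP [/setD1P []]|j _].
have := S_pointed x_cone Nx_cone; apply/eqP; rewrite scaler_eq0 negb_or lt0r_neq0 //=.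
by apply: irredundant_gen_neq0 A_irr _; case/setD1P: j1_in.
Qed.

Lemma irredundant_exposed i : i \in A -> exists m : 'rV[rat]_n,
  [/\ forall x, in_cone S x -> 0 <= pairQ x m, pairQ (gen i) m = 0
    & forall j, j \in A :\ i -> 0 < pairQ (gen j) m].
Proof.
move=> iA; have [j0 beta_neq0] : exists j0, gen i 0 j0 != 0.
  case: (pickP (fun j => gen i 0 j != 0)) => [j0 ?|gen0]; first by exists j0.
  case/negP: (irredundant_gen_neq0 A_irr iA); apply/eqP/rowP => j.
  by rewrite [RHS]mxE; apply/eqP/negbFE/gen0.
pose a (j : 'I_(size S)) := gen j - (gen j 0 j0 / gen i 0 j0) *: gen i.
have [[y y_pos]|rel] := gordan (A :\ i) a; last first.
  by case: (irredundant_no_relation iA beta_neq0 rel).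
pose m := y - (pairQ (gen i) y / gen i 0 j0) *: delta_mx 0 j0.
have m_a j : pairQ (gen j) m = pairQ (a j) y.
  by rewrite linearBr linearBl linearZr_LR linearZl_LR /= pairQ_delta; ring.
have m_i : pairQ (gen i) m = 0 by rewrite m_a /a divff // scale1r subrr linear0l.
have m_ge0 j : j \in A -> 0 <= pairQ (gen j) m.
  by case: (eqVneq j i) => [->|ji jA]; rewrite ?m_i // ltW ?m_a ?y_pos ?inE ?ji.
exists m; split=> // [x /A_gen [lam lam_ge0 ->]|j jAi]; last by rewrite m_a y_pos.
rewrite linear_sumlz; apply: sumr_ge0 => j jA.
by rewrite linearZl_LR mulr_ge0 ?m_ge0.
Qed.

Lemma irredundant_ray_face i : i \in A -> is_face_of (in_cone S) (ray (nth 0 S i)).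
Proof.
move=> iA; have [m [m_ge0 m_i m_pos]] := irredundant_exposed iA.
exists m; split => // x; split=> [[t [t_ge0 ->]]|[/A_gen [lam lam_ge0 ->] xm0]].
  by split; [apply/A_gen/cone_on_gen | rewrite linearZl_LR /= m_i mulr0].
have terms_ge0 j : j \in A -> 0 <= pairQ (lam j *: gen j) m.
  by move=> jA; apply/m_ge0/A_gen/cone_on_gen.
move: xm0; rewrite linear_sumlz => /(psumr_eq0P terms_ge0) terms0.
exists (lam i); split => //; rewrite (big_setD1 i iA) /= big1 ?addr0 // => j jAi.
have jA : j \in A by case/setD1P: jAi.
move: (terms0 j jA); rewrite linearZl_LR /= => /eqP.
by rewrite mulf_eq0 (gt_eqF (m_pos j jAi)) orbF => /eqP->; rewrite scale0r.
Qed.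

Lemma irredundant_ray_gen i : i \in A ->
  exists2 q, ray_gen (in_cone S) q & exists2 c : rat, 0 < c & gen i = c *: toQ q.
Proof.
move=> iA; have : nth 0 S i != 0 by rewrite -toQ_eq0 (irredundant_gen_neq0 A_irr iA).
move=> /primitive_decomposition [c c_gt0 [q q_prim s_cq]].
have c_gt0' : 0 < c%:~R :> rat by rewrite ltr0z.
have gen_cq : gen i = c%:~R *: toQ q by rewrite /gen s_cq toQZ.
exists q; last by exists c%:~R.
split => //; have [m [m_ge0 m_face]] := irredundant_ray_face iA.
exists m; split => // x; rewrite -m_face; split=> [[t [t_ge0 ->]]|[t [t_ge0 ->]]].
  exists (t / c%:~R); split; first exact: divr_ge0 t_ge0 (ltW c_gt0').
  by rewrite -/(gen i) gen_cq scalerA divfK ?gt_eqF.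
exists (t * c%:~R); split; first exact: mulr_ge0 t_ge0 (ltW c_gt0').
by rewrite -scalerA -gen_cq.
Qed.

End ExtremeRays.

Lemma ray_gen_in_cone n (S : seq 'rV[int]_n) q :
  ray_gen (in_cone S) q -> in_cone S (toQ q).
Proof.
move=> [_ [m [_ m_face]]]; have [] := (m_face (toQ q)).1 => //.
by exists 1; rewrite ler01 scale1r.
Qed.

Lemma pairQ_ge0_by_ray_gens n (S : seq 'rV[int]_n) w : strongly_convex S ->
  (forall q, ray_gen (in_cone S) q -> 0 <= pairQ (toQ q) w) ->
  forall x, in_cone S x -> 0 <= pairQ x w.
Proof.
move=> S_pointed w_ge0; have [A A_irr A_gen] := exists_irredundant S.
move=> x /A_gen [lam lam_ge0 ->]; rewrite linear_sumlz; apply: sumr_ge0 => i iA.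
have [q q_gen [c c_gt0 ->]] := irredundant_ray_gen S_pointed A_irr A_gen iA.
rewrite !linearZl_LR /=; apply: mulr_ge0 => //.
by apply: mulr_ge0; [exact: ltW | exact: w_ge0].
Qed.

Lemma lattice_exposer_of_face n (S : seq 'rV[int]_n) (F : 'rV[rat]_n -> Prop) :
  is_face_of (in_cone S) F -> exists M : 'rV[int]_n, [/\ in_perp F M, in_dual S M
    & forall x, in_cone S x -> ~ F x -> 0 < pairQ x (toQ M)].
Proof.
move=> [m [m_ge0 m_face]]; have [D D_gt0 [M M_Dm]] := scale_to_lattice m.
have D_gt0' : 0 < D%:~R :> rat by rewrite ltr0z.
have pairQ_M x : pairQ x (toQ M) = D%:~R * pairQ x m by rewrite M_Dm linearZr_LR.
exists M; split=> [x /m_face [_ xm0]|x x_cone|x x_cone xF]; rewrite pairQ_M.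
- by rewrite xm0 mulr0.
- exact: mulr_ge0 (ltW D_gt0') (m_ge0 x x_cone).
rewrite pmulr_rgt0 // lt0r m_ge0 // andbT; apply/eqP => xm0.
by apply/xF/m_face.
Qed.

Lemma in_perp_lincomb n k (g : 'rV[rat]_n -> Prop) (M : 'rV[int]_n)
    (E : 'I_k -> 'rV[int]_n) (a : 'I_k -> int) :
  in_perp g M -> (forall j, a j != 0 -> in_perp g (E j)) ->
  in_perp g (M + \sum_j a j *: E j).
Proof.
move=> M_perp E_perp x gx; rewrite /toQ map_mxD map_mx_sum linearDr linear_sumr /=.
rewrite M_perp // add0r big1 // => j _; rewrite map_mxZ linearZr_LR /=.
by case: (eqVneq (a j) 0) => [->|/E_perp->]; rewrite ?mulr0z ?mul0r ?mulr0.
Qed.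

Section DemazureRoots.
Variables (n k : nat) (S : seq 'rV[int]_n) (p E : 'I_k -> 'rV[int]_n).
Hypothesis E_root : forall j, demazure_root S (p j) (E j).
Hypothesis E_compat : forall j s, pairZ (p s) (E j) = - (j == s)%:R.

Lemma pairZ_add_roots (M : 'rV[int]_n) (a : 'I_k -> int) i :
  pairZ (p i) (M + \sum_j a j *: E j) = pairZ (p i) M - a i.
Proof.
rewrite linearDr linear_sumr (bigD1 i) //= big1 => [|j /negbTE ji].
  by rewrite linearZr_LR /= E_compat eqxx mulrN1 addr0.
by rewrite linearZr_LR /= E_compat ji oppr0 mulr0.
Qed.

Lemma in_dual_add_roots (M : 'rV[int]_n) (a : 'I_k -> int) :
  strongly_convex S -> in_dual S M -> (forall j, 0 <= a j <= pairZ (p j) M) ->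
  in_dual S (M + \sum_j a j *: E j).
Proof.
move=> S_pointed M_dual a_bnd; apply: pairQ_ge0_by_ray_gens => // q q_gen.
rewrite pairQ_toQ ler0z.
case: (pickP (fun j => q == p j)) => [j /eqP-> | q_ne].
  by rewrite pairZ_add_roots // subr_ge0; case/andP: (a_bnd j).
rewrite linearDr linear_sumr /=; apply: addr_ge0.
  by have := M_dual _ (ray_gen_in_cone q_gen); rewrite pairQ_toQ ler0z.
apply: sumr_ge0 => j _; rewrite linearZr_LR /= mulr_ge0 //; first by case/andP: (a_bnd j).
by case: (E_root j) => _ [_]; apply => // qj; move: (q_ne j); rewrite qj eqxx.
Qed.

Lemma exists_delta_dual (g : 'rV[rat]_n -> Prop) (M : 'rV[int]_n) r :
  strongly_convex S -> in_perp g M -> in_dual S M ->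
  (forall j, ~ g (toQ (p j)) -> 0 < pairZ (p j) M /\ in_perp g (E j)) ->
  ~ g (toQ (p r)) ->
  exists u, [/\ in_perp g u, in_dual S u & forall j, pairZ (p j) u = (j == r)%:R].
Proof.
move=> S_pointed M_perp M_dual M_pos pr_g.
have pj_cone j : in_cone S (toQ (p j)) by apply: ray_gen_in_cone; case: (E_root j).
have pM_ge0 j : 0 <= pairZ (p j) M by rewrite -(ler0z rat) -pairQ_toQ M_dual.
have pM_g j : g (toQ (p j)) -> pairZ (p j) M = 0.
  by move=> /M_perp /eqP; rewrite pairQ_toQ intr_eq0 => /eqP.
pose a j := pairZ (p j) M - (j == r)%:R.
have a_g j : g (toQ (p j)) -> a j = 0.
  move=> pj_g; rewrite /a pM_g //.
  by case: eqP => [jr|_]; [case: pr_g; rewrite -jr | rewrite subr0].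
have a_bnd j : 0 <= a j <= pairZ (p j) M.
  rewrite /a; case: eqP => [->|_]; last by rewrite subr0 pM_ge0 lexx.
  by have := (M_pos r pr_g).1; lia.
exists (M + \sum_j a j *: E j); split.
- apply: in_perp_lincomb => // j aj_neq0.
  suff pj_g : ~ g (toQ (p j)) by case: (M_pos j pj_g).
  by move=> /a_g/eqP; rewrite (negbTE aj_neq0).
- exact: in_dual_add_roots.
- by move=> j; rewrite pairZ_add_roots // /a subKr.
Qed.

End DemazureRoots.



Theorem mainTheorem11 (n k : nat) (S : seq 'rV[int]_n)
  (tau gamma : 'rV[rat]_n -> Prop) (p : 'I_k -> 'rV[int]_n)
  (e1 e2 : 'I_k -> 'rV[int]_n) :
  (* sigma = cone S is a strongly convex rational polyhedral cone *)
  strongly_convex S ->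
  (* tau is a regular face of sigma with primitive ray generators p_1..p_k *)
  is_face_of (in_cone S) tau ->
  (forall q, ray_gen tau q <-> exists i, q = p i) ->
  extends_to_basis p ->
  (* {e_1^(r), e_2^(r)} Demazure roots of sigma compatible with tau *)
  (forall r, demazure_root S (p r) (e1 r) /\ demazure_root S (p r) (e2 r)) ->
  (forall r s, pairZ (p s) (e1 r) = - (r == s)%:R /\
               pairZ (p s) (e2 r) = - (r == s)%:R) ->
  (* gamma is a face of sigma *)
  is_face_of (in_cone S) gamma ->
  (forall r, ~ gamma (toQ (p r)) -> in_perp gamma (e1 r) \/ in_perp gamma (e2 r)) ->
  forall r, ~ gamma (toQ (p r)) ->
    exists u : 'rV[int]_n,
      in_perp gamma u /\ in_dual S u /\ pairZ (p r) u = 1 /\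
      (forall j, j != r -> pairZ (p j) u = 0).
Proof.
move=> S_pointed _ _ _ roots compat gamma_face perp_root r pr_gamma.
have [M [M_perp M_dual M_pos]] := lattice_exposer_of_face gamma_face.
have /fin_all_exists [E E_spec] : forall j, exists e : 'rV[int]_n,
    (e = e1 j \/ e = e2 j) /\ (~ gamma (toQ (p j)) -> in_perp gamma e).
  move=> j; have [pj_gamma|/perp_root [perp|perp]] := classic (gamma (toQ (p j))).
  - by exists (e1 j); split=> [|/(_ pj_gamma)]; [left|].
  - by exists (e1 j); split; [left|].
  - by exists (e2 j); split; [right|].
have E_root j : demazure_root S (p j) (E j) by case: (E_spec j) => -[]->; case: (roots j).
have E_compat j s : pairZ (p s) (E j) = - (j == s)%:R.
  by case: (E_spec j) => -[]->; case: (compat j s).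
have [|u [u_perp u_dual u_delta]] :=
  exists_delta_dual E_root E_compat S_pointed M_perp M_dual _ pr_gamma.
  move=> j pj_gamma; split; last exact: (E_spec j).2.
  have pj_cone : in_cone S (toQ (p j)) by apply: ray_gen_in_cone; case: (E_root j).
  by have := M_pos _ pj_cone pj_gamma; rewrite pairQ_toQ ltr0z.
exists u; split; [done | split; [done | split]]; first by rewrite u_delta eqxx.
by move=> j /negbTE jr; rewrite u_delta jr.
Qed.
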